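(* (1) The function $x\mapsto (2-x)K(x)-2E(x)$ is strictly increasing from $(0,1)$ onto $(0,+\infty)$. (2) For all $0<x<1$, $$(2-x)K(x)-2E(x)\ge \frac2\pi\big(E(x)^2-(1-x)K(x)^2\big).$$
   Context: $K(x)={\cal K}(\sqrt x)$ and $E(x)={\cal E}(\sqrt x)$ for $x\in[0,1)$, where ${\cal K}(r)=\int_0^{\pi/2}(1-r^2\sin^2t)^{-1/2}dt$ and ${\cal E}(r)=\int_0^{\pi/2}(1-r^2\sin^2t)^{1/2}dt$ are the complete elliptic integrals of the first and second kind. *)

From Stdlib Require Import Reals.
From Coquelicot Require Import Coquelicot.
Open Scope R_scope.

Definition calK (r : R) : R :=
  RInt (fun t => / sqrt (1 - r ^ 2 * sin t ^ 2)) 0 (PI / 2).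
Definition calE (r : R) : R :=
  RInt (fun t => sqrt (1 - r ^ 2 * sin t ^ 2)) 0 (PI / 2).

Definition K (x : R) : R := calK (sqrt x).
Definition E (x : R) : R := calE (sqrt x).

Definition f6 (x : R) : R := (2 - x) * K x - 2 * E x.

From Stdlib Require Import Reals Lra Psatz ssreflect.
From Coquelicot Require Import Coquelicot.
Open Scope R_scope.

(* Write x for the parameter (x = k^2) and Delta(t) = sqrt(1 - x sin^2 t).  Besides K and E
   consider P = int sin^2/Delta and Q = int sin^2/Delta^3, all integrals over [0, pi/2].
   Differentiating under the integral sign gives K' = Q/2 and E' = -P/2; the pointwise
   identity 1/Delta - Delta = x sin^2/Delta gives K - E = xP, and since sin t cos t / Delta
   vanishes at both ends, integrating its derivative gives K - P = (1-x)Q.  Hence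
   f6' = xQ/2 > 0, and H = (pi/2) f6 - E^2 + (1-x) K^2 has H' = x (pi Q/4 - P^2) >= 0 because
   P^2 <= Q int sin^2 Delta <= pi Q/4 by Cauchy-Schwarz.  Both f6 and H vanish at 0.
   Surjectivity follows from E <= pi/2 and
   K(1 - q^2) >= int_0^(pi/2) dt / sqrt((pi/2 - t)^2 + q^2) >= -ln q. *)

Lemma is_derive_eq (f : R -> R) (x l l' : R) : is_derive f x l -> l = l' -> is_derive f x l'.
Proof. by move=> H <-. Qed.

Lemma continuity_pt_of_ex_derive (f : R -> R) x : ex_derive f x -> continuity_pt f x.
Proof.
  move=> H; apply continuity_pt_filterlim.
  exact: (ex_derive_continuous (K := R_AbsRing) (V := R_NormedModule)).
Qed.

Lemma Rle_of_is_derive_nonneg (f df : R -> R) a b :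
  a <= b -> (forall c, a <= c <= b -> is_derive f c (df c)) ->
  (forall c, a < c < b -> 0 <= df c) -> f a <= f b.
Proof.
  move=> [Hab | <-] Hd Hnn; last lra.
  have [c [Hc Hcab]] :=
    MVT_cor2 f df a b Hab (fun c Hc => proj1 (is_derive_Reals _ _ _) (Hd c Hc)).
  have := Hnn c Hcab; nra.
Qed.

Lemma Rlt_of_is_derive_pos (f df : R -> R) a b :
  a < b -> (forall c, a <= c <= b -> is_derive f c (df c)) ->
  (forall c, a < c < b -> 0 < df c) -> f a < f b.
Proof.
  move=> Hab Hd Hpos.
  have [c [Hc Hcab]] :=
    MVT_cor2 f df a b Hab (fun c Hc => proj1 (is_derive_Reals _ _ _) (Hd c Hc)).
  have := Hpos c Hcab; nra.
Qed.

Lemma RInt_zero a b : RInt (fun _ => 0) a b = 0.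
Proof. rewrite RInt_const /scal /= /mult /=; ring. Qed.

Lemma RInt_lincomb3 (f g h : R -> R) (a b c1 c2 c3 : R) :
  ex_RInt f a b -> ex_RInt g a b -> ex_RInt h a b ->
  RInt (fun t => c1 * f t + c2 * g t + c3 * h t) a b =
  c1 * RInt f a b + c2 * RInt g a b + c3 * RInt h a b.
Proof.
  move=> Hf Hg Hh; apply: is_RInt_unique.
  apply: is_RInt_plus; [apply: is_RInt_plus |]; apply: is_RInt_scal; exact: RInt_correct.
Qed.

Lemma quadratic_nonneg_discr (A B C : R) :
  0 <= A -> (forall l, 0 <= C - 2 * l * B + l ^ 2 * A) -> B ^ 2 <= A * C.
Proof.
  move=> [HA | <-] Hq.
  - have := Hq (B / A).
    have -> : C - 2 * (B / A) * B + (B / A) ^ 2 * A = (A * C - B ^ 2) / A by field; lra.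
    move=> Hdiv; have := Rmult_le_pos _ _ Hdiv (Rlt_le _ _ HA).
    rewrite /Rdiv Rmult_assoc Rinv_l; lra.
  - case: (Req_dec B 0) => [-> | HB]; first lra.
    have := Hq ((C + 1) / (2 * B)).
    have -> : C - 2 * ((C + 1) / (2 * B)) * B + ((C + 1) / (2 * B)) ^ 2 * 0 = -1 by field.
    lra.
Qed.

Lemma RInt_Cauchy_Schwarz (p q s : R -> R) (a b : R) :
  a <= b -> ex_RInt p a b -> ex_RInt q a b -> ex_RInt s a b ->
  (forall t, a < t < b -> 0 <= q t /\ 0 <= s t /\ p t ^ 2 <= q t * s t) ->
  RInt p a b ^ 2 <= RInt s a b * RInt q a b.
Proof.
  move=> Hab Hp Hq Hs Hpt; apply: quadratic_nonneg_discr.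
  - rewrite -(RInt_zero a b); apply: RInt_le => //; first exact: ex_RInt_const.
    by move=> t /Hpt [_ []].
  - move=> l; rewrite -(RInt_zero a b).
    have -> : RInt q a b - 2 * l * RInt p a b + l ^ 2 * RInt s a b =
              RInt (fun t => 1 * q t + (- 2 * l) * p t + l ^ 2 * s t) a b.
    { rewrite RInt_lincomb3 //; ring. }
    apply: RInt_le => //; first exact: ex_RInt_const.
    + apply: ex_RInt_plus; [apply: ex_RInt_plus |]; exact: ex_RInt_scal.
    + move=> t /Hpt [Hq0 [Hs0 Hps]].
      case: (Req_dec (s t) 0) => [Hs00 | Hsn].
      * have -> : p t = 0 by rewrite Hs00 Rmult_0_r in Hps; nra.
        rewrite Hs00; lra.
      * apply: (Rmult_le_reg_l (s t)); first lra.
        have := pow2_ge_0 (l * s t - p t); nra.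
Qed.

Lemma sin2_bound t : 0 <= sin t ^ 2 <= 1.
Proof. have := SIN_bound t; simpl; nra. Qed.

Lemma continuous_sin_pow n t : continuous (fun t => sin t ^ n) t.
Proof. apply: ex_derive_continuous; auto_derive; done. Qed.

Lemma continuous_sqrt_pos u : 0 < u -> continuous sqrt u.
Proof. move=> Hu; apply: ex_derive_continuous; auto_derive; lra. Qed.

Lemma continuous_inv_sqrt u : 0 < u -> continuous (fun v => / sqrt v) u.
Proof.
  move=> Hu; apply: ex_derive_continuous; auto_derive.
  split; [lra | split; [apply: Rgt_not_eq; exact: sqrt_lt_R0 | done]].
Qed.

Lemma continuous_inv_mul_sqrt u : 0 < u -> continuous (fun v => / (v * sqrt v)) u.
Proof.
  move=> Hu; apply: ex_derive_continuous; auto_derive; have := sqrt_lt_R0 _ Hu.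
  split; [lra | split; [apply: Rgt_not_eq; nra | done]].
Qed.

Lemma continuous_scal_pos (c : R) (phi : R -> R) :
  (forall u, 0 < u -> continuous phi u) -> forall u, 0 < u -> continuous (fun v => c * phi v) u.
Proof. move=> Hphi u Hu; apply: continuous_mult; [exact: continuous_const | exact: Hphi]. Qed.

Lemma is_derive_sqrt_half u : 0 < u -> is_derive sqrt u (/ 2 * / sqrt u).
Proof. move=> Hu; auto_derive; [lra | field; apply: Rgt_not_eq; exact: sqrt_lt_R0]. Qed.

Lemma is_derive_inv_sqrt u :
  0 < u -> is_derive (fun v => / sqrt v) u (- / 2 * / (u * sqrt u)).
Proof.
  move=> Hu; have Hs := sqrt_lt_R0 _ Hu; auto_derive.
  - split; [lra | split; [lra | done]].
  - transitivity (- / 2 * / (sqrt u * sqrt u * sqrt u)); first (field; lra).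
    by rewrite sqrt_sqrt //; lra.
Qed.

Lemma sq_add_pos v q : 0 < q -> 0 < v ^ 2 + q ^ 2.
Proof. move=> Hq; have := pow2_ge_0 v; have := pow_lt q 2 Hq; lra. Qed.

Lemma add_sqrt_sq_add_pos v q : 0 < q -> 0 < v + sqrt (v ^ 2 + q ^ 2).
Proof.
  move=> Hq; have Hpos := Rlt_le _ _ (sq_add_pos v q Hq).
  have Hs := sqrt_pos (v ^ 2 + q ^ 2); have Hss := sqrt_sqrt _ Hpos; nra.
Qed.

Lemma is_RInt_inv_sqrt_sq_add a q : 0 < q ->
  is_RInt (fun t => / sqrt ((a - t) ^ 2 + q ^ 2)) 0 a (ln (a + sqrt (a ^ 2 + q ^ 2)) - ln q).
Proof.
  move=> Hq.
  pose G t := - ln ((a - t) + sqrt ((a - t) ^ 2 + q ^ 2)).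
  have HG : is_RInt (fun t => / sqrt ((a - t) ^ 2 + q ^ 2)) 0 a (minus (G a) (G 0)).
  { apply: (is_RInt_derive G (fun t => / sqrt ((a - t) ^ 2 + q ^ 2))) => t _.
    - have Hsum := add_sqrt_sq_add_pos (a - t) q Hq.
      have Hs := sqrt_lt_R0 _ (sq_add_pos (a - t) q Hq).
      have Hsq : (a + - t) * ((a + - t) * 1) + q * (q * 1) = (a - t) ^ 2 + q ^ 2 by ring.
      rewrite /G; auto_derive; rewrite Hsq; change (a + - t) with (a - t).
      + split; [exact: sq_add_pos | split; [exact: Hsum | done]].
      + field; lra.
    - have Hs := sqrt_lt_R0 _ (sq_add_pos (a - t) q Hq).
      apply: ex_derive_continuous; auto_derive.
      rewrite (_ : (a + - t) * ((a + - t) * 1) + q * (q * 1) = (a - t) ^ 2 + q ^ 2); last ring.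
      split; [exact: sq_add_pos | split; [lra | done]]. }
  have HGa : G a = - ln q.
  { rewrite /G Rminus_eq_0 Rplus_0_l (_ : 0 ^ 2 + q ^ 2 = q ^ 2); last ring.
    by rewrite sqrt_pow2 //; lra. }
  have HG0 : G 0 = - ln (a + sqrt (a ^ 2 + q ^ 2)) by rewrite /G Rminus_0_r.
  change (minus ?u ?v) with (u - v) in HG; rewrite HGa HG0 in HG.
  by rewrite (_ : ln (a + sqrt (a ^ 2 + q ^ 2)) - ln q =
                  - ln q - - ln (a + sqrt (a ^ 2 + q ^ 2))); last ring.
Qed.

(** * Parametric integrals over [0, pi/2] *)

Definition delta2 (x t : R) : R := 1 - x * sin t ^ 2.

Lemma delta2_pos x t : x < 1 -> 0 < delta2 x t.
Proof. have := sin2_bound t; rewrite /delta2; case: (Rle_lt_dec x 0); nra. Qed.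

Lemma delta2_le_1 x t : 0 <= x -> delta2 x t <= 1.
Proof. have := sin2_bound t; rewrite /delta2; nra. Qed.

Lemma sqrt_delta2 x t : x < 1 ->
  0 < sqrt (delta2 x t) /\ sqrt (delta2 x t) * sqrt (delta2 x t) = 1 - x * sin t ^ 2.
Proof.
  move=> Hx; have Hd := delta2_pos x t Hx.
  split; [exact: sqrt_lt_R0 | apply: sqrt_sqrt; lra].
Qed.

Lemma is_derive_delta2 x t : is_derive (delta2 x) t (- x * (2 * sin t * cos t)).
Proof. rewrite /delta2; auto_derive => //; ring. Qed.

Lemma continuity_2d_pt_sin_pow n x t : continuity_2d_pt (fun _ v => sin v ^ n) x t.
Proof.
  apply: (continuity_1d_2d_pt_comp (fun v => sin v ^ n) (fun _ v => v));
    last exact: continuity_2d_pt_id2.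
  apply/continuity_pt_filterlim; exact: continuous_sin_pow.
Qed.

Lemma continuity_2d_pt_delta2 x t : continuity_2d_pt delta2 x t.
Proof.
  apply/continuity_2d_pt_minus; first exact: continuity_2d_pt_const.
  apply: continuity_2d_pt_mult; [exact: continuity_2d_pt_id1 | exact: continuity_2d_pt_sin_pow].
Qed.

Definition ellint (m : nat) (phi : R -> R) (x : R) : R :=
  RInt (fun t => sin t ^ (2 * m) * phi (delta2 x t)) 0 (PI / 2).

Lemma continuous_ellint_integrand m phi x t :
  (forall u, 0 < u -> continuous phi u) -> x < 1 ->
  continuous (fun t => sin t ^ (2 * m) * phi (delta2 x t)) t.
Proof.
  move=> Hphi Hx; apply: continuous_mult; first exact: continuous_sin_pow.
  apply: (continuous_comp (delta2 x)); last exact: Hphi (delta2_pos _ _ Hx).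
  apply: ex_derive_continuous; eexists; exact: is_derive_delta2.
Qed.

Lemma ex_RInt_ellint m phi x :
  (forall u, 0 < u -> continuous phi u) -> x < 1 ->
  ex_RInt (fun t => sin t ^ (2 * m) * phi (delta2 x t)) 0 (PI / 2).
Proof.
  move=> Hphi Hx; apply: ex_RInt_continuous => t _.
  exact: continuous_ellint_integrand.
Qed.

Lemma is_derive_ellint_integrand m phi dphi t u :
  (forall v, 0 < v -> is_derive phi v (dphi v)) -> u < 1 ->
  is_derive (fun z => sin t ^ (2 * m) * phi (delta2 z t)) u
    (- (sin t ^ (2 * S m) * dphi (delta2 u t))).
Proof.
  move=> Hphi Hu; have Hd := Hphi _ (delta2_pos u t Hu).
  have -> : (2 * S m = 2 * m + 2)%nat by lia.
  rewrite pow_add; set c := sin t ^ (2 * m).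
  rewrite /delta2 in Hd *; auto_derive; first by exists (dphi (1 - u * sin t ^ 2)).
  rewrite (is_derive_unique _ _ _ Hd); ring.
Qed.

Lemma is_derive_ellint m phi dphi x :
  (forall u, 0 < u -> is_derive phi u (dphi u)) ->
  (forall u, 0 < u -> continuous dphi u) -> x < 1 ->
  is_derive (ellint m phi) x (- ellint (S m) dphi x).
Proof.
  move=> Hphi Hdphi Hx.
  have Hcont : forall u, 0 < u -> continuous phi u.
  { move=> u Hu; apply: ex_derive_continuous; eexists; exact: Hphi. }
  have Hnear : locally x (fun y => y < 1) by apply: (open_lt 1).
  have -> : - ellint (S m) dphi x =
    RInt (fun t => Derive (fun z => sin t ^ (2 * m) * phi (delta2 z t)) x) 0 (PI / 2).
  { have := RInt_opp _ _ _ (ex_RInt_ellint (S m) dphi x Hdphi Hx).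
    rewrite /opp /= => <-.
    apply: RInt_ext => t _; symmetry; apply: is_derive_unique.
    exact: is_derive_ellint_integrand. }
  apply: is_derive_RInt_param.
  - apply: filter_imp Hnear => y Hy t _; eexists.
    exact: (is_derive_ellint_integrand m phi dphi t y Hphi Hy).
  - move=> t _.
    apply: (continuity_2d_pt_ext_loc (fun u v => - (sin v ^ (2 * S m) * dphi (delta2 u v)))).
    { have Hp : 0 < 1 - x by lra.
      exists (mkposreal _ Hp) => u v Hu _; simpl in Hu.
      have Hu1 : u < 1 by move/Rabs_lt_between: Hu; lra.
      symmetry; apply: is_derive_unique; exact: is_derive_ellint_integrand. }
    apply/continuity_2d_pt_opp/continuity_2d_pt_mult; first exact: continuity_2d_pt_sin_pow.
    apply: (continuity_1d_2d_pt_comp dphi delta2); last exact: continuity_2d_pt_delta2.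
    apply/continuity_pt_filterlim; exact: Hdphi (delta2_pos _ _ Hx).
  - apply: filter_imp Hnear => y Hy; exact: ex_RInt_ellint.
Qed.

Lemma ellint_scal m c phi x :
  (forall u, 0 < u -> continuous phi u) -> x < 1 ->
  ellint m (fun u => c * phi u) x = c * ellint m phi x.
Proof.
  move=> Hphi Hx; rewrite /ellint.
  transitivity (scal c (RInt (fun t => sin t ^ (2 * m) * phi (delta2 x t)) 0 (PI / 2)));
    last done.
  rewrite -RInt_scal; last exact: ex_RInt_ellint.
  apply: RInt_ext => t _; rewrite /scal /= /mult /=; ring.
Qed.

Lemma ellint_le m phi psi x :
  0 <= x < 1 ->
  (forall u, 0 < u -> continuous phi u) -> (forall u, 0 < u -> continuous psi u) ->
  (forall u, 0 < u <= 1 -> phi u <= psi u) ->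
  ellint m phi x <= ellint m psi x.
Proof.
  move=> Hx Hphi Hpsi Hle; apply: RInt_le; first (have := PI_RGT_0; lra).
  1, 2: apply: ex_RInt_ellint => //; lra.
  move=> t _; apply: Rmult_le_compat_l.
  - rewrite pow_mult; apply: pow_le; have := sin2_bound t; lra.
  - apply: Hle; split; [apply: delta2_pos | apply: delta2_le_1]; lra.
Qed.

Lemma ellint0_const c x : ellint 0 (fun _ => c) x = c * (PI / 2).
Proof.
  rewrite /ellint (RInt_ext _ (fun _ => c)) => [|t _]; last by simpl; ring.
  rewrite RInt_const /scal /= /mult /=; ring.
Qed.

Lemma ellint1_const c x : ellint 1 (fun _ => c) x = c * (PI / 4).
Proof.
  have Hint : is_RInt (fun t => sin t ^ 2 * c) 0 (PI / 2)
      (minus (c * ((PI / 2 - sin (PI / 2) * cos (PI / 2)) / 2))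
             (c * ((0 - sin 0 * cos 0) / 2))).
  { apply: (is_RInt_derive (fun t => c * ((t - sin t * cos t) / 2)) (fun t => sin t ^ 2 * c))
      => t _.
    - auto_derive => //; rewrite [RHS]Rmult_comm; congr (c * _).
      have := sin2_cos2 t; rewrite /Rsqr; nra.
    - apply: ex_derive_continuous; auto_derive; done. }
  rewrite /ellint (is_RInt_unique _ _ _ _ Hint) sin_0 cos_PI2 /minus /plus /opp /=.
  field.
Qed.

Lemma ellint0_at0 phi : ellint 0 phi 0 = phi 1 * (PI / 2).
Proof.
  rewrite -(ellint0_const (phi 1) 0) /ellint; apply: RInt_ext => t _.
  by rewrite /delta2 Rmult_0_l Rminus_0_r.
Qed.

(** * The complete elliptic integrals and their companions *)

(* Unlike [K] and [E], these are defined and differentiable for every [x < 1], including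
   negative [x], so the mean value theorem applies on intervals [[0, x]]. *)
Definition Kint : R -> R := ellint 0 (fun u => / sqrt u).
Definition Eint : R -> R := ellint 0 sqrt.
Definition Pint : R -> R := ellint 1 (fun u => / sqrt u).
Definition Qint : R -> R := ellint 1 (fun u => / (u * sqrt u)).
Definition Sint : R -> R := ellint 1 sqrt.

Lemma K_eq x : 0 <= x -> K x = Kint x.
Proof.
  move=> Hx; apply: RInt_ext => t _.
  by rewrite /delta2 pow2_sqrt // -[sin t ^ (2 * 0)]/1 Rmult_1_l.
Qed.

Lemma E_eq x : 0 <= x -> E x = Eint x.
Proof.
  move=> Hx; apply: RInt_ext => t _.
  by rewrite /delta2 pow2_sqrt // -[sin t ^ (2 * 0)]/1 Rmult_1_l.
Qed.

Lemma is_derive_Kint x : x < 1 -> is_derive Kint x (/ 2 * Qint x).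
Proof.
  move=> Hx.
  have -> : / 2 * Qint x = - ellint 1 (fun u => - / 2 * / (u * sqrt u)) x.
  { rewrite ellint_scal //; [rewrite /Qint; ring | exact: continuous_inv_mul_sqrt]. }
  apply: is_derive_ellint => //; first exact: is_derive_inv_sqrt.
  exact/continuous_scal_pos/continuous_inv_mul_sqrt.
Qed.

Lemma is_derive_Eint x : x < 1 -> is_derive Eint x (- / 2 * Pint x).
Proof.
  move=> Hx.
  have -> : - / 2 * Pint x = - ellint 1 (fun u => / 2 * / sqrt u) x.
  { rewrite ellint_scal //; [rewrite /Pint; ring | exact: continuous_inv_sqrt]. }
  apply: is_derive_ellint => //; first exact: is_derive_sqrt_half.
  exact/continuous_scal_pos/continuous_inv_sqrt.
Qed.

Lemma Kint_sub_Eint x : x < 1 -> Kint x - Eint x = x * Pint x.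
Proof.
  move=> Hx.
  have := RInt_lincomb3 _ _ _ 0 (PI / 2) 1 (-1) (- x)
    (ex_RInt_ellint 0 _ x continuous_inv_sqrt Hx)
    (ex_RInt_ellint 0 _ x continuous_sqrt_pos Hx)
    (ex_RInt_ellint 1 _ x continuous_inv_sqrt Hx).
  rewrite (RInt_ext _ (fun _ => 0)) ?RInt_zero /Kint /Eint /Pint /ellint /=; last first.
  { move=> t _ /=; have [Hr Hrr] := sqrt_delta2 x t Hx; set r := sqrt _ in Hr Hrr *.
    transitivity ((1 - r * r - x * sin t ^ 2) / r); first (field; lra).
    rewrite Hrr; field; lra. }
  lra.
Qed.

Lemma is_derive_sin_cos_div_sqrt_delta2 x t : x < 1 ->
  is_derive (fun t => sin t * cos t / sqrt (delta2 x t)) t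
    (/ sqrt (delta2 x t) - sin t ^ 2 / sqrt (delta2 x t)
     - (1 - x) * sin t ^ 2 / (delta2 x t * sqrt (delta2 x t))).
Proof.
  move=> Hx; have [Hr Hrr] := sqrt_delta2 x t Hx; have Hd := delta2_pos x t Hx.
  auto_derive.
  - split; first by exists (- x * (2 * sin t * cos t)); exact: is_derive_delta2.
    split; [lra | split; [lra | done]].
  - rewrite (is_derive_unique _ _ _ (is_derive_delta2 x t)).
    have Hd2 : delta2 x t = sqrt (delta2 x t) * sqrt (delta2 x t) by rewrite Hrr.
    set r := sqrt _ in Hr Hrr Hd2 *; rewrite Hd2.
    have Hc : cos t ^ 2 + sin t ^ 2 - 1 = 0 by have := sin2_cos2 t; rewrite /Rsqr /=; lra.
    have Hr2 : 1 - x * sin t ^ 2 - r * r = 0 by lra.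
    apply: Rminus_diag_uniq.
    transitivity ((sin t ^ 2 * (1 - x * sin t ^ 2 - r * r)
                   + (cos t ^ 2 + sin t ^ 2 - 1) * (r * r + x * sin t ^ 2)) / (r * r * r)).
    { field; lra. }
    rewrite Hc Hr2; field; lra.
Qed.

Lemma Kint_sub_Pint x : x < 1 -> Kint x - Pint x = (1 - x) * Qint x.
Proof.
  move=> Hx.
  have := RInt_lincomb3 _ _ _ 0 (PI / 2) 1 (-1) (- (1 - x))
    (ex_RInt_ellint 0 _ x continuous_inv_sqrt Hx)
    (ex_RInt_ellint 1 _ x continuous_inv_sqrt Hx)
    (ex_RInt_ellint 1 _ x continuous_inv_mul_sqrt Hx).
  rewrite /Kint /Pint /Qint /ellint /=.
  rewrite (is_RInt_unique _ _ _ _ (is_RInt_derive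
            (fun t => sin t * cos t / sqrt (delta2 x t)) _ 0 (PI / 2) _ _)).
  - rewrite sin_0 cos_PI2 /minus /plus /opp /=; lra.
  - move=> t _; apply: (is_derive_eq _ _ _ _ (is_derive_sin_cos_div_sqrt_delta2 x t Hx)).
    rewrite /Rdiv; ring.
  - move=> t _.
    apply: continuous_plus; [apply: continuous_plus |]; apply: continuous_mult;
      try exact: continuous_const.
    + exact: (continuous_ellint_integrand 0 _ x t continuous_inv_sqrt Hx).
    + exact: (continuous_ellint_integrand 1 _ x t continuous_inv_sqrt Hx).
    + exact: (continuous_ellint_integrand 1 _ x t continuous_inv_mul_sqrt Hx).
Qed.

Lemma Eint_le x : 0 <= x < 1 -> Eint x <= PI / 2.
Proof.
  move=> Hx; rewrite -[PI / 2]Rmult_1_l -(ellint0_const 1 x).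
  apply: ellint_le => //; first exact: continuous_sqrt_pos.
  - move=> u _; exact: continuous_const.
  - move=> u Hu; rewrite -sqrt_1; apply: sqrt_le_1_alt; lra.
Qed.

Lemma Sint_le x : 0 <= x < 1 -> Sint x <= PI / 4.
Proof.
  move=> Hx; rewrite -[PI / 4]Rmult_1_l -(ellint1_const 1 x).
  apply: ellint_le => //; first exact: continuous_sqrt_pos.
  - move=> u _; exact: continuous_const.
  - move=> u Hu; rewrite -sqrt_1; apply: sqrt_le_1_alt; lra.
Qed.

Lemma Qint_ge x : 0 <= x < 1 -> PI / 4 <= Qint x.
Proof.
  move=> Hx; rewrite -[PI / 4]Rmult_1_l -(ellint1_const 1 x).
  apply: ellint_le => //.
  - move=> u _; exact: continuous_const.
  - exact: continuous_inv_mul_sqrt.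
  - move=> u Hu; have Hs : 0 < sqrt u <= 1.
    { split; [apply: sqrt_lt_R0 | rewrite -sqrt_1; apply: sqrt_le_1_alt]; lra. }
    rewrite -[X in X <= _]Rinv_1; apply: Rinv_le_contravar; nra.
Qed.

Lemma Pint_sq_le x : 0 <= x < 1 -> Pint x ^ 2 <= PI / 4 * Qint x.
Proof.
  move=> Hx; have Hx1 : x < 1 by lra.
  have HCS : Pint x ^ 2 <= Sint x * Qint x.
  { apply: RInt_Cauchy_Schwarz; first (have := PI_RGT_0; lra).
    - exact: (ex_RInt_ellint 1 _ x continuous_inv_sqrt Hx1).
    - exact: (ex_RInt_ellint 1 _ x continuous_inv_mul_sqrt Hx1).
    - exact: (ex_RInt_ellint 1 _ x continuous_sqrt_pos Hx1).
    - move=> t _ /=; rewrite !Rmult_1_r; have [Hr Hrr] := sqrt_delta2 x t Hx1.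
      have Hd : delta2 x t = sqrt (delta2 x t) * sqrt (delta2 x t) by rewrite Hrr.
      set r := sqrt _ in Hr Hd *; rewrite Hd.
      have Hs : 0 <= sin t * sin t by nra.
      have Hr3 : 0 < / (r * r * r) by apply/Rinv_0_lt_compat/Rmult_lt_0_compat; [nra | lra].
      split; [nra | split; [nra | right; field; lra]]. }
  have := Sint_le x Hx; have := Qint_ge x Hx; have := PI_RGT_0; nra.
Qed.

Lemma Kint_ge_ln q : 0 < q < 1 -> - ln q <= Kint (1 - q ^ 2).
Proof.
  move=> Hq; have Hpi := PI2_1; have Hx : 1 - q ^ 2 < 1 by nra.
  have Hs := sqrt_pos ((PI / 2) ^ 2 + q ^ 2).
  have Hln : 0 <= ln (PI / 2 + sqrt ((PI / 2) ^ 2 + q ^ 2)).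
  { rewrite -ln_1; apply: ln_le; lra. }
  apply: (Rle_trans _ (ln (PI / 2 + sqrt ((PI / 2) ^ 2 + q ^ 2)) - ln q)); first lra.
  rewrite -(is_RInt_unique _ _ _ _ (is_RInt_inv_sqrt_sq_add (PI / 2) q (proj1 Hq))).
  apply: RInt_le; [lra | eexists; exact: is_RInt_inv_sqrt_sq_add (proj1 Hq)
                  | exact: (ex_RInt_ellint 0 _ _ continuous_inv_sqrt Hx) |].
  move=> t Ht /=; rewrite Rmult_1_l.
  apply: Rinv_le_contravar; first exact: sqrt_lt_R0 (delta2_pos _ t Hx).
  apply: sqrt_le_1_alt.
  (* delta2 (1 - q^2) t = cos^2 t + q^2 sin^2 t, and 0 <= cos t <= pi/2 - t *)
  have Hc0 : 0 <= cos t by apply: cos_ge_0; lra.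
  have Hc1 : cos t < PI / 2 - t by rewrite -sin_shift; apply: sin_lt_x; lra.
  have := sin2_cos2 t; have := sin2_bound t; rewrite /delta2 /Rsqr /=; nra.
Qed.

Lemma Kint_unbounded m : exists x, 0 < x < 1 /\ m < Kint x.
Proof.
  pose q := exp (- (Rabs m + 1)).
  have Hq : 0 < q < 1.
  { split; first exact: exp_pos.
    rewrite -exp_0; apply: exp_increasing; have := Rabs_pos m; lra. }
  exists (1 - q ^ 2); split; first nra.
  have := Kint_ge_ln q Hq; rewrite /q ln_exp; have := Rle_abs m; lra.
Qed.

(** * The function f6 and the auxiliary function H6 *)

Definition F6 (x : R) : R := (2 - x) * Kint x - 2 * Eint x.

Definition H6 (x : R) : R := PI / 2 * F6 x - Eint x ^ 2 + (1 - x) * Kint x ^ 2.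

Lemma f6_eq x : 0 <= x -> f6 x = F6 x.
Proof. by move=> Hx; rewrite /f6 /F6 K_eq // E_eq. Qed.

Lemma F6_0 : F6 0 = 0.
Proof. rewrite /F6 /Kint /Eint !ellint0_at0 sqrt_1 Rinv_1; ring. Qed.

Lemma H6_0 : H6 0 = 0.
Proof. rewrite /H6 F6_0 /Kint /Eint !ellint0_at0 sqrt_1 Rinv_1; ring. Qed.

Lemma is_derive_F6 x : x < 1 -> is_derive F6 x (x / 2 * Qint x).
Proof.
  move=> Hx; have HK := is_derive_Kint x Hx; have HE := is_derive_Eint x Hx.
  rewrite /F6; auto_derive.
  - split; [eexists; exact: HK | split; [eexists; exact: HE | done]].
  - rewrite (is_derive_unique _ _ _ HK) (is_derive_unique _ _ _ HE).
    have := Kint_sub_Pint x Hx; nra.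
Qed.

Lemma is_derive_H6 x : x < 1 -> is_derive H6 x (x * (PI / 4 * Qint x - Pint x ^ 2)).
Proof.
  move=> Hx; have HK := is_derive_Kint x Hx; have HE := is_derive_Eint x Hx.
  have HF := is_derive_F6 x Hx.
  rewrite /H6; auto_derive.
  - split; [eexists; exact: HF | split; [eexists; exact: HE | split; [eexists; exact: HK | done]]].
  - rewrite (is_derive_unique _ _ _ HK) (is_derive_unique _ _ _ HE) (is_derive_unique _ _ _ HF).
    have HQ := f_equal (Rmult (Kint x)) (Kint_sub_Pint x Hx).
    have HP := f_equal (Rmult (Pint x)) (Kint_sub_Eint x Hx).
    nra.
Qed.

Lemma F6_lt x y : 0 <= x -> x < y -> y < 1 -> F6 x < F6 y.
Proof.
  move=> Hx Hxy Hy; apply: (Rlt_of_is_derive_pos F6 (fun c => c / 2 * Qint c)) => // c Hc.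
  - apply: is_derive_F6; lra.
  - have := Qint_ge c ltac:(lra); have := PI_RGT_0; nra.
Qed.

Lemma F6_onto y : 0 < y -> exists x, 0 < x < 1 /\ F6 x = y.
Proof.
  move=> Hy; have [b [Hb HK]] := Kint_unbounded (y + PI).
  have Hlo : F6 0 - y < 0 by rewrite F6_0; lra.
  have Hhi : 0 < F6 b - y by have := Eint_le b ltac:(lra); have := PI_RGT_0; rewrite /F6; nra.
  have Hcont : forall c, 0 <= c <= b -> continuity_pt (fun z => F6 z - y) c.
  { move=> c Hc; apply: continuity_pt_of_ex_derive.
    auto_derive; exists (c / 2 * Qint c); apply: is_derive_F6; lra. }
  have [z [[Hz0 Hzb] HFz]] := Ranalysis5.IVT_interv _ 0 b Hcont (proj1 Hb) Hlo Hhi.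
  exists z; split; last lra.
  split; last lra.
  case: Hz0 => // Hz0; rewrite -Hz0 in HFz; lra.
Qed.

Lemma H6_nonneg x : 0 <= x < 1 -> 0 <= H6 x.
Proof.
  move=> Hx; rewrite -H6_0.
  apply: (Rle_of_is_derive_nonneg H6 (fun c => c * (PI / 4 * Qint c - Pint c ^ 2)))
    => [| c Hc | c Hc].
  - lra.
  - apply: is_derive_H6; lra.
  - have := Pint_sq_le c ltac:(lra); nra.
Qed.

Lemma F6_ge x : 0 <= x < 1 -> F6 x >= 2 / PI * (Eint x ^ 2 - (1 - x) * Kint x ^ 2).
Proof.
  move=> Hx; have Hpi := PI_RGT_0; have := H6_nonneg x Hx; rewrite /H6 => Hh.
  apply: Rle_ge; apply: (Rmult_le_reg_l (PI / 2)); first lra.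
  rewrite -Rmult_assoc (_ : PI / 2 * (2 / PI) = 1); [lra | field; lra].
Qed.

Theorem mainTheorem6 :
  (* (1) strictly increasing on (0,1) ... *)
  ((forall x y : R, 0 < x < 1 -> 0 < y < 1 -> x < y -> f6 x < f6 y) /\
   (* ... and maps (0,1) onto (0,+oo) *)
   (forall x : R, 0 < x < 1 -> 0 < f6 x) /\
   (forall y : R, 0 < y -> exists x : R, 0 < x < 1 /\ f6 x = y)) /\
  (* (2) *)
  (forall x : R, 0 < x < 1 ->
     f6 x >= 2 / PI * (E x ^ 2 - (1 - x) * K x ^ 2)).
Proof.
  split; [split; [| split] |].
  - move=> x y Hx Hy Hxy; rewrite !f6_eq; try lra.
    apply: F6_lt; lra.
  - move=> x Hx; rewrite f6_eq; last lra.
    rewrite -[X in X < _]F6_0.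
    apply: F6_lt; lra.
  - move=> y Hy; have [x [Hx <-]] := F6_onto y Hy.
    by exists x; split => //; apply: f6_eq; lra.
  - move=> x Hx; rewrite f6_eq ?E_eq ?K_eq; try lra.
    apply: F6_ge; lra.
Qed.
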